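(* Let $m>n$ be coprime positive integers, $\lambda\in X$, $\Lambda=x(\lambda)$ and $\alpha=\epsilon_i-\delta_j$ ($i\in[n]$, $j\in[m]$). If $\Lambda\in\Pi_{-\alpha}$, then either $\lambda\in X_{-\alpha}$, or $\alpha=\epsilon_1-\delta_m$ and $\lambda_n=\lambda'_m=0$.
   Context: $X$ is the set of partitions $\lambda=(\lambda_1\ge\dots\ge\lambda_n\ge0)$ with $\lambda_1\le m$, drawn in an $n\times m$ rectangle with rows $\epsilon_1,\dots,\epsilon_n$ top to bottom and columns $\delta_1,\dots,\delta_m$; the diagram consists of boxes $\epsilon_i-\delta_j$ with $j\le\lambda_{n+1-i}$; $\lambda'_j=\#\{i:\lambda_i\ge j\}$. $X_{-\alpha}$ is the set of $\lambda$ for which the box $\alpha$ is an inner corner (in $\lambda$, and removing it gives an element of $X$). $x(\lambda)=(a_1,\dots,a_n|b_1,\dots,b_m)$ with $a_i=m(n-i)+n\lambda_{n+1-i}$, $b_j=n(j-1)+m\lambda'_j$. $\Pi_{-\alpha}=\{\Lambda: a_i-b_j=n-m\}$. *)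

From mathcomp Require Import all_boot all_order all_algebra.
Set Implicit Arguments. Unset Strict Implicit. Unset Printing Implicit Defensive.

(* Partitions lambda = (lambda_1 >= ... >= lambda_n >= 0) are encoded as
   functions lam : nat -> nat using 1-based indices 1..n; values outside
   [1, n] are irrelevant (nothing below depends on them). *)

Definition inX (n m : nat) (lam : nat -> nat) : Prop :=
  (forall i, 1 <= i -> i < n -> lam i.+1 <= lam i) /\ (0 < n -> lam 1 <= m).

(* box eps_i - delta_j (row i from the top, column j) is in the diagram of lam:
   j <= lambda_{n+1-i} *)
Definition in_diag (n : nat) (lam : nat -> nat) (i j : nat) : Prop :=
  [/\ 1 <= i <= n, 1 <= j & j <= lam (n.+1 - i)].

Definition conjp (n : nat) (lam : nat -> nat) (j : nat) : nat :=
  count (fun i => j <= lam i) (iota 1 n).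

Definition xa (n m : nat) (lam : nat -> nat) (i : nat) : int :=
  (m * (n - i) + n * lam (n.+1 - i))%:Z.
Definition xb (n m : nat) (lam : nat -> nat) (j : nat) : int :=
  (n * (j - 1) + m * conjp n lam j)%:Z.

Definition inPi (n m : nat) (lam : nat -> nat) (i j : nat) : Prop :=
  (xa n m lam i - xb n m lam j = n%:Z - m%:Z)%R.

Definition inXminus (n m : nat) (lam : nat -> nat) (i j : nat) : Prop :=
  in_diag n lam i j /\
  exists mu : nat -> nat, inX n m mu /\
    forall i' j', in_diag n mu i' j' <-> (in_diag n lam i' j' /\ (i', j') <> (i, j)).

From mathcomp Require Import all_boot all_order all_algebra.
From mathcomp Require Import zify.

Set Implicit Arguments.
Unset Strict Implicit.
Unset Printing Implicit Defensive.

(* Put r = n + 1 - i.  The condition a_i - b_j = n - m says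
   m (r - lambda'_j) = n (j - lambda_r), so by coprimality n divides
   r - lambda'_j and m divides j - lambda_r.  As 1 <= r <= n, lambda'_j <= n,
   lambda_r <= m and 1 <= j <= m, either both differences vanish, or
   r - lambda'_j = n and j - lambda_r = m, which is the exceptional case.
   In the first case j = lambda_r, and lambda'_j = r forces
   lambda_(r+1) < j, so alpha is an inner corner: lowering lambda_r by one
   removes exactly that box. *)

Lemma coprime_dvd_of_mul_eq m n x y : coprime m n -> m * x = n * y -> n %| x.
Proof.
move=> co_mn mxE; have co_nm : coprime n m by rewrite coprime_sym.
by rewrite -(Gauss_dvdr x co_nm) mxE dvdn_mulr.
Qed.

Lemma lin_eq_coprime_cases m n r c l j :
  0 < n -> 0 < m -> coprime m n ->
  0 < r <= n -> c <= n -> l <= m -> 0 < j <= m ->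
  m * r + n * l = m * c + n * j ->
  (r = c /\ l = j) \/ [/\ r = n, c = 0, l = 0 & j = m].
Proof.
move=> n_gt0 m_gt0 co_mn /andP[r_gt0 r_le] c_le l_le /andP[j_gt0 j_le] E.
have [c_le_r|r_lt_c] := leqP c r; last first.
  have E' : n * (l - j) = m * (c - r) by rewrite !mulnBr; lia.
  have m_dvd : m %| l - j by rewrite -(Gauss_dvdr _ co_mn) E' dvdn_mulr.
  have [lj0|lj_gt0] := posnP (l - j).
    by move: E'; rewrite lj0 muln0 => /esym/eqP; rewrite muln_eq0; lia.
  by have := dvdn_leq lj_gt0 m_dvd; lia.
have E' : m * (r - c) = n * (j - l) by rewrite !mulnBr; lia.
have [rc0|rc_gt0] := posnP (r - c).
  have rc : r = c by lia.
  left; split=> //; apply/eqP; rewrite -(eqn_pmul2l n_gt0); apply/eqP.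
  by move: E; rewrite rc; apply: addnI.
have rcn : r - c = n.
  by have := dvdn_leq rc_gt0 (coprime_dvd_of_mul_eq co_mn E'); lia.
have jlm : j - l = m by apply/eqP; rewrite -(eqn_pmul2l n_gt0) -E' rcn mulnC.
by right; split; lia.
Qed.

Section Partition.

Variables (n m : nat) (lam : nat -> nat).

Lemma conjp_le j : conjp n lam j <= n.
Proof. by rewrite /conjp -[leqRHS](size_iota 1 n) count_size. Qed.

Hypothesis lam_dec : forall i, 1 <= i -> i < n -> lam i.+1 <= lam i.

Lemma lam_nonincr a b : 1 <= a -> a <= b -> b <= n -> lam b <= lam a.
Proof.
move=> a_gt0; elim: b => [|b IH] ab b_le; first lia.
have [a_lt|//|<-//] := ltngtP a b.+1; last lia.
by apply: leq_trans (IH _ _); [apply: lam_dec|..]; lia.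
Qed.

Lemma conjp_ge r j : 1 <= r <= n -> j <= lam r -> r <= conjp n lam j.
Proof.
move=> /andP[r_gt0 r_le] j_le; rewrite /conjp -(subnKC r_le) iotaD count_cat.
have: all (fun k => j <= lam k) (iota 1 r).
  apply/allP => k; rewrite mem_iota => k_in.
  by apply: leq_trans j_le (lam_nonincr _ _ _); lia.
by rewrite all_count size_iota => /eqP->; rewrite leq_addr.
Qed.

Lemma lam_succ_lt_of_conjp r : 1 <= r < n -> conjp n lam (lam r) = r ->
  lam r.+1 < lam r.
Proof.
move=> /andP[r_gt0 r_lt] conjpE; rewrite ltnNge; apply/negP => lam_le.
have r1_in : 1 <= r.+1 <= n by apply/andP; lia.
by have := conjp_ge r1_in lam_le; rewrite conjpE ltnn.
Qed.

Definition remove_box r k := if k == r then (lam k).-1 else lam k.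

Lemma inX_remove_box r :
  inX n m lam -> 1 <= r <= n -> (r < n -> lam r.+1 < lam r) ->
  inX n m (remove_box r).
Proof.
move=> [_ lam1_le] /andP[r_gt0 r_le] corner.
split=> [k k_gt0 k_lt|n_gt0]; rewrite /remove_box.
  have := lam_dec k_gt0 k_lt.
  case: (eqVneq k r) => [kE|_]; last by case: eqP; lia.
  by move: corner k_lt; rewrite -kE => /[apply]; case: eqP; lia.
by have := lam1_le n_gt0; case: eqP; lia.
Qed.

Lemma in_diag_remove_box i i' j' : 1 <= i <= n ->
  in_diag n (remove_box (n.+1 - i)) i' j' <->
  in_diag n lam i' j' /\ (i', j') <> (i, lam (n.+1 - i)).
Proof.
move=> i_in; rewrite /in_diag /remove_box.
case: (eqVneq i' i) => [->|i'_ne]; rewrite ?eqxx.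
  split=> [[_ j'_gt0 j'_le]|[[_ j'_gt0 j'_le] neq]].
    by split=> [|[j'E]]; [split|]; lia.
  suff : j' <> lam (n.+1 - i) by split=> //; lia.
  by move=> j'E; apply: neq; rewrite j'E.
have -> : (n.+1 - i' == n.+1 - i) = false by apply/eqP; lia.
by split=> [d|[]//]; split=> // [[i'E _]]; rewrite i'E eqxx in i'_ne.
Qed.

Lemma inXminus_corner i :
  inX n m lam -> 1 <= i <= n -> 0 < lam (n.+1 - i) ->
  (n.+1 - i < n -> lam (n.+1 - i).+1 < lam (n.+1 - i)) ->
  inXminus n m lam i (lam (n.+1 - i)).
Proof.
move=> lamX i_in lam_gt0 corner; split; first by split.
exists (remove_box (n.+1 - i)); split.
  by apply: inX_remove_box => //; apply/andP; lia.
by move=> i' j'; apply: in_diag_remove_box.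
Qed.

End Partition.

Lemma inPi_lin_eq n m lam i j : 1 <= i <= n -> 1 <= j ->
  inPi n m lam i j ->
  m * (n.+1 - i) + n * lam (n.+1 - i) = m * conjp n lam j + n * j.
Proof.
move=> /andP[_ i_le] j_gt0; rewrite /inPi /xa /xb => E.
have rE : n.+1 - i = (n - i).+1 by lia.
have nj : n * j = n * (j - 1) + n by rewrite -mulnSr; congr (n * _); lia.
by rewrite rE in E *; rewrite mulnSr nj; lia.
Qed.

Theorem lemma4p6 (n m : nat) (lam : nat -> nat) (i j : nat) :
  0 < n -> n < m -> coprime m n ->
  inX n m lam ->
  1 <= i <= n -> 1 <= j <= m ->
  inPi n m lam i j ->
  inXminus n m lam i j \/
  [/\ i = 1, j = m, lam n = 0 & conjp n lam m = 0].
Proof.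
move=> n_gt0 n_lt_m co_mn lamX i_in j_in piE.
have [lam_dec lam1_le] := lamX.
have r_in : 0 < n.+1 - i <= n by apply/andP; lia.
have lam_le : lam (n.+1 - i) <= m.
  by apply: leq_trans (lam1_le n_gt0); apply: (lam_nonincr lam_dec); lia.
have [[rE lamE]|[rE cE lamE jE]] :=
  lin_eq_coprime_cases n_gt0 (ltn_trans n_gt0 n_lt_m) co_mn r_in
    (conjp_le _ _ _) lam_le j_in (inPi_lin_eq i_in (proj1 (andP j_in)) piE).
- left; rewrite -lamE; apply: inXminus_corner => //.
    by rewrite lamE; case/andP: j_in.
  move=> r_lt; apply: (lam_succ_lt_of_conjp lam_dec); last by rewrite lamE.
  by apply/andP; lia.
- right; split=> //; first lia.
    by rewrite -[in lam n]rE.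
  by rewrite -jE cE.
Qed.
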